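(* Let $d$ be an even positive integer and $s$ a positive integer with $2s\leqslant d$. For every $\varepsilon\in I^s$, $\overline{B_\varepsilon}=B_{\bar\varepsilon}$.
   Context: Let $I=\{0,1\}$. For $x\in I^n$, its antipode is $\bar x=(1-x_1,\ldots,1-x_n)$, and for $A\subseteq I^n$, $\bar A=\{\bar x\colon x\in A\}$; $|x|=\sum_i x_i$. Let $\alpha=(0,\ldots,0)$, $\omega=(1,\ldots,1)\in I^s$. For $\varepsilon\in I^s\setminus\{\alpha,\omega\}$ let $i=t(\varepsilon)$ be the unique index with $\varepsilon_i\neq\varepsilon_{i+1}=\cdots=\varepsilon_s$, and $A_\varepsilon=\{\varepsilon_1\}\times\cdots\times\{\varepsilon_i\}\times I^{s-1-i}\subseteq I^{s-1}$. Define subsets of $I^{d-s}$: $X_0=\{x\colon |x|\leqslant \frac d2-s\}$; $X_k=\{x\colon |x|=\frac d2-s+k\}$ for $0<k<s$; $X_s=\{x\colon |x|\geqslant \frac d2\}$. For $\varepsilon\in I^s\setminus\{\alpha,\omega\}$ set $B_\varepsilon=X_{|\varepsilon|}\cap(I^{d-2s+1}\times A_\varepsilon)$ (where $I^{d-s}=I^{d-2s+1}\times I^{s-1}$), and set $B_\alpha=X_0$, $B_\omega=X_s$. *)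

(* Points of I^n are n.-tuple bool (coordinate i, 1-based, is nth false x (i-1)). *)
From mathcomp Require Import all_boot.
Set Implicit Arguments. Unset Strict Implicit. Unset Printing Implicit Defensive.

Definition weight (n : nat) (x : n.-tuple bool) : nat := count id x.

Definition antipode (n : nat) (x : n.-tuple bool) : n.-tuple bool := map_tuple negb x.
Definition antipode_set (n : nat) (A : {set n.-tuple bool}) : {set n.-tuple bool} :=
  [set antipode x | x in A].

Definition alpha (s : nat) : s.-tuple bool := [tuple of nseq s false].
Definition omega (s : nat) : s.-tuple bool := [tuple of nseq s true].

Definition co (s : nat) (e : s.-tuple bool) (i : nat) : bool := nth false e i.-1.

Definition is_t (s : nat) (e : s.-tuple bool) (i : nat) : bool :=
  [&& 0 < i, i < s, co e i != co e i.+1 &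
      [forall j : 'I_s.+1, (i < j) ==> (co e j == co e s)]].

(* A_e = {e_1} x ... x {e_i} x I^(s-1-i), i = t(e), subset of I^(s-1) *)
Definition Aset (s : nat) (e : s.-tuple bool) : {set (s.-1).-tuple bool} :=
  [set y : (s.-1).-tuple bool |
     [exists i : 'I_s, is_t e i &&
        [forall j : 'I_s, (0 < j <= i) ==> (nth false y j.-1 == co e j)]]].

Definition Xset (d s k : nat) : {set (d - s).-tuple bool} :=
  if k == 0 then [set x | weight x <= d./2 - s]
  else if k < s then [set x | weight x == d./2 - s + k]
  else if k == s then [set x | d./2 <= weight x]
  else set0.

(* B_e subset of I^(d-s) = I^(d-2s+1) x I^(s-1) *)
Definition Bset (d s : nat) (e : s.-tuple bool) : {set (d - s).-tuple bool} :=
  if e == alpha s then Xset d s 0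
  else if e == omega s then Xset d s s
  else Xset d s (weight e) :&:
       [set x : (d - s).-tuple bool | [exists y : (s.-1).-tuple bool,
                   (y \in Aset e) && (drop (d - 2 * s + 1) x == y :> seq bool)]].
Arguments Bset d s e : clear implicits.
Arguments Xset d s k : clear implicits.

From mathcomp Require Import all_boot.
From mathcomp Require Import zify.

Set Implicit Arguments.
Unset Strict Implicit.
Unset Printing Implicit Defensive.

(* Complementation sends weight w in I^(d-s) to (d-s)-w; as d = 2(d/2), this
   exchanges the weight conditions of X_k and X_(s-k), while |bar e| = s-|e|.
   It also commutes with projecting onto the last s-1 coordinates, and it maps
   A_e to A_(bar e) because t(bar e) = t(e). *)

Lemma antipodeK n : involutive (@antipode n).
Proof. by move=> x; apply: val_inj; exact: (mapK negbK). Qed.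

Lemma antipode_inj n : injective (@antipode n).
Proof. exact: inv_inj (@antipodeK n). Qed.

Lemma mem_antipode_set n (A : {set n.-tuple bool}) x :
  (x \in antipode_set A) = (antipode x \in A).
Proof.
apply/imsetP/idP => [[y Ay ->]|Ax]; first by rewrite antipodeK.
by exists (antipode x); rewrite ?antipodeK.
Qed.

Lemma antipode_setI n (A B : {set n.-tuple bool}) :
  antipode_set (A :&: B) = antipode_set A :&: antipode_set B.
Proof. by apply/setP => x; rewrite !(inE, mem_antipode_set). Qed.

Lemma weight_le n (x : n.-tuple bool) : weight x <= n.
Proof. by rewrite /weight -{2}(size_tuple x) count_size. Qed.

Lemma weight_antipode n (x : n.-tuple bool) : weight (antipode x) = n - weight x.
Proof.
rewrite /weight /antipode /= count_map (eq_count (a2 := predC id)) //.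
by have := count_predC id x; rewrite size_tuple; lia.
Qed.

Lemma antipode_alpha n : antipode (alpha n) = omega n.
Proof. by apply: val_inj; rewrite /= map_nseq. Qed.

Lemma antipode_omega n : antipode (omega n) = alpha n.
Proof. by apply: val_inj; rewrite /= map_nseq. Qed.

Lemma omega_neq_alpha n : 0 < n -> omega n != alpha n.
Proof. by case: n. Qed.

Lemma co_antipode s (e : s.-tuple bool) i :
  i.-1 < s -> co (antipode e) i = ~~ co e i.
Proof. by move=> lt_i_s; rewrite /co (nth_map false) ?size_tuple. Qed.

Lemma is_t_antipode s (e : s.-tuple bool) i : is_t (antipode e) i = is_t e i.
Proof.
rewrite /is_t; have [i_gt0 /=|] := ltnP 0 i; last by [].
have [lt_i_s /=|] := ltnP i s; last by [].
rewrite !co_antipode ?(inj_eq negb_inj); try lia.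
congr andb; apply: eq_forallb => j.
by rewrite !co_antipode ?(inj_eq negb_inj) //; have := ltn_ord j; lia.
Qed.

Lemma antipode_set_Aset s (e : s.-tuple bool) :
  antipode_set (Aset e) = Aset (antipode e).
Proof.
apply/setP => y; rewrite mem_antipode_set !inE.
apply: eq_existsb => i; rewrite is_t_antipode; congr andb.
apply: eq_forallb => j; have [j_in /=|//] := boolP (0 < j <= i).
have := ltn_ord i; have := ltn_ord j => lt_j_s lt_i_s.
rewrite co_antipode; last lia.
by rewrite (nth_map false) ?size_tuple ?(inj_eq negb_inj); lia.
Qed.

Definition suffix_set n k m (A : {set k.-tuple bool}) : {set n.-tuple bool} :=
  [set x : n.-tuple bool |
     [exists y : k.-tuple bool, (y \in A) && (drop m x == y :> seq bool)]].

Lemma antipode_set_suffix n k m (A : {set k.-tuple bool}) :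
  antipode_set (suffix_set n m A) = suffix_set n m (antipode_set A).
Proof.
apply/setP => x; rewrite mem_antipode_set !inE.
apply/existsP/existsP => -[y /andP[Ay /eqP drop_y]]; exists (antipode y).
  by rewrite mem_antipode_set antipodeK Ay /= -drop_y map_drop (mapK negbK).
by rewrite -mem_antipode_set Ay /= -drop_y map_drop.
Qed.

Lemma antipode_set_Xset d s k : ~~ odd d -> 0 < s -> 2 * s <= d -> k <= s ->
  antipode_set (Xset d s k) = Xset d s (s - k).
Proof.
move=> even_d s_gt0 le_2s_d le_k_s.
have d_eq : d = d./2.*2 by rewrite -{1}(odd_double_half d) (negbTE even_d).
apply/setP => x; rewrite mem_antipode_set /Xset.
have le_wx := weight_le x; have s_neq0 := negbTE (lt0n_neq0 s_gt0).
have [-> | k_gt0] := posnP k.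
  rewrite subn0 ltnn eqxx s_neq0 !inE weight_antipode; apply/idP/idP; lia.
have [lt_k_s | le_s_k] := ltnP k s.
  have -> : (s - k == 0) = false by lia.
  have -> : s - k < s by lia.
  rewrite !inE weight_antipode; apply/eqP/eqP; lia.
have -> : k = s by lia.
rewrite subnn eqxx !inE weight_antipode; apply/idP/idP; lia.
Qed.

Lemma Bset_mixed d s (e : s.-tuple bool) : e != alpha s -> e != omega s ->
  Bset d s e = Xset d s (weight e) :&: suffix_set (d - s) (d - 2 * s + 1) (Aset e).
Proof. by rewrite /Bset => /negbTE-> /negbTE->. Qed.

Theorem lemma3 (d s : nat) (e : s.-tuple bool) :
  0 < d -> ~~ odd d -> 0 < s -> 2 * s <= d ->
  antipode_set (Bset d s e) = Bset d s (antipode e).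
Proof.
move=> _ even_d s_gt0 le_2s_d.
have X_antipode := antipode_set_Xset even_d s_gt0 le_2s_d.
have [-> | e_alpha] := eqVneq e (alpha s).
  by rewrite antipode_alpha /Bset eqxx ifN ?omega_neq_alpha // eqxx X_antipode ?subn0.
have [-> | e_omega] := eqVneq e (omega s).
  by rewrite antipode_omega /Bset ifN ?omega_neq_alpha // !eqxx X_antipode ?subnn.
have ae_alpha : antipode e != alpha s.
  by rewrite -(inj_eq (@antipode_inj s)) antipodeK antipode_alpha.
have ae_omega : antipode e != omega s.
  by rewrite -(inj_eq (@antipode_inj s)) antipodeK antipode_omega.
rewrite !Bset_mixed // antipode_setI X_antipode ?weight_le //.
by rewrite antipode_set_suffix antipode_set_Aset weight_antipode.
Qed.
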